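(* Let $\epsilon>0$, $B\in\mathbb{R}$, $s\in\mathbb{N}$, and let $v_1,\dots,v_N\in\mathbb{C}^{2^s}$ be orthonormal vectors such that $QK^{\epsilon}(|v_i\rangle\langle v_i|)\le B$ for all $i\le N$. Then $N\le\epsilon^{-1}2^{B}$.
   Context: Let $\mathbb{U}$ be a fixed universal prefix-free Turing machine. Finite sets of vectors with complex algebraic entries are coded by natural numbers via a fixed canonical effective indexing; $\mathbb{U}(\sigma)\downarrow=F$ means that $\mathbb{U}$ on input $\sigma$ halts and outputs the code of $F$. $\mathbb{C}^{2^n}_{alg}$ denotes the set of vectors in $\mathbb{C}^{2^n}$ all of whose entries are complex algebraic numbers. All logarithms are base 2. For a density matrix $\tau$ on $\mathbb{C}^{2^{n}}$ write $|\tau|=n$. For $\epsilon>0$ define $QK^{\epsilon}(\tau)=\inf\{|\sigma|+\log|F| : \mathbb{U}(\sigma)\downarrow=F,\ F \text{ an orthonormal subset of } \mathbb{C}^{2^{|\tau|}}_{alg},\ \sum_{v\in F}\langle v|\tau|v\rangle>\epsilon\}$, with $\inf\emptyset=\infty$. *)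

From HB Require Import structures.
From mathcomp Require Import all_boot all_order all_algebra.
From mathcomp Require Import finmap.
From mathcomp Require Import complex.
From mathcomp Require Import all_classical all_reals all_analysis.

Set Implicit Arguments.
Unset Strict Implicit.
Unset Printing Implicit Defensive.

Import Order.TTheory GRing.Theory Num.Theory.
Local Open Scope ring_scope.

Section Defs.
Variable R : realType.
Local Notation C := R[i].

Definition alg_num (z : C) : Prop :=
  exists p : {poly rat}, p != 0 /\ root (map_poly ratr p) z.

Definition vec_of (n : nat) (v : seq C) : 'cV[C]_n := \col_i nth 0 v i.

Definition inner (n : nat) (u w : 'cV[C]_n) : C := \sum_k (u k 0)^* * w k 0.

Definition expect (n : nat) (tau : 'M[C]_n) (v : 'cV[C]_n) : C :=
  \sum_k \sum_l (v k 0)^* * tau k l * v l 0.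

Definition ketbra (n : nat) (v : 'cV[C]_n) : 'M[C]_n :=
  \matrix_(k, l) (v k 0 * (v l 0)^*).

Definition orthonormal_alg (n : nat) (F : {fset seq C}) : Prop :=
  (forall v, v \in F -> size v = (2 ^ n)%N /\ (forall z, z \in v -> alg_num z)) /\
  (forall v w, v \in F -> w \in F ->
     inner (vec_of (2 ^ n) v) (vec_of (2 ^ n) w) = (v == w)%:R).

Definition log2 (x : R) : R := ln x / ln 2.

Definition prefix_free (U : seq bool -> option {fset seq C}) : Prop :=
  forall s t, U s <> None -> U t <> None -> prefix s t -> s = t.

(* QK^eps(tau), for tau a (2^n x 2^n) matrix, so |tau| = n *)
Definition QK (U : seq bool -> option {fset seq C}) (eps : R) (n : nat)
    (tau : 'M[C]_(2 ^ n)) : \bar R :=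
  ereal_inf [set x : \bar R | exists (sigma : seq bool) (F : {fset seq C}),
    [/\ U sigma = Some F, orthonormal_alg n F,
        (eps%:C)%C < \sum_(v <- F) expect tau (vec_of (2 ^ n) v)
      & x = ((size sigma)%:R + log2 (#|` F|)%:R)%:E]].

End Defs.
Arguments QK {R} U eps n tau.

From HB Require Import structures.
From mathcomp Require Import all_boot all_order all_algebra.
From mathcomp Require Import finmap.
From mathcomp Require Import complex.
From mathcomp Require Import all_classical all_reals all_analysis.
Set Implicit Arguments.
Unset Strict Implicit.
Unset Printing Implicit Defensive.
Import Order.TTheory GRing.Theory Num.Theory.
Local Open Scope ring_scope.

(* For every x > B and every i, the definition of QK as an infimum yields a
   description sigma_i and an orthonormal family F_i = U(sigma_i) with
   |sigma_i| + log |F_i| < x capturing more than eps of the weight of v_i.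
   Grouping the indices i by their description sigma, Bessel's inequality
   bounds the weight captured by U(sigma) over all the orthonormal v_i by
   |U(sigma)|, so eps * N <= sum_sigma |U(sigma)|.  Since the distinct
   descriptions are prefix free, Kraft's inequality together with
   |U(sigma)| <= 2^(x - |sigma|) gives sum_sigma |U(sigma)| <= 2^x.  Finally
   eps * N <= 2^x for all x > B implies eps * N <= 2^B. *)

Definition prefix_free_seq (S : seq (seq bool)) : Prop :=
  {in S &, forall s t, prefix s t -> s = t}.

(* Kraft's induction step: the strings of S starting with the bit b, once
   that bit is removed, form a prefix-free list of strings of length <= L. *)
Lemma kraft_step L b (S : seq (seq bool)) :
  (forall S', uniq S' -> all (fun s => size s <= L)%N S' -> prefix_free_seq S' ->
     (\sum_(s <- S') 2 ^ (L - size s) <= 2 ^ L)%N) ->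
  uniq S -> [::] \notin S -> prefix_free_seq S ->
  all (fun s => size s <= L.+1)%N S ->
  (\sum_(s <- S | head false s == b) 2 ^ (L.+1 - size s) <= 2 ^ L)%N.
Proof.
move=> IH uS nS pS aS; rewrite -big_filter.
set Sb := [seq s <- S | head false s == b].
have nonnil s : s \in Sb -> exists x t, s = x :: t.
  rewrite mem_filter => /andP[_ sS]; case: s sS => [|x t] sS.
    by rewrite sS in nS.
  by exists x, t.
have -> : (\sum_(s <- Sb) 2 ^ (L.+1 - size s) =
           \sum_(s <- Sb) 2 ^ (L - size (behead s)))%N.
  by apply: eq_big_seq => s /nonnil [x [t ->]]; rewrite /= subSS.
rewrite -(big_map behead xpredT (fun t => 2 ^ (L - size t))%N).
have head_b s : s \in Sb -> head false s = b.
  by rewrite mem_filter => /andP[/eqP].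
have inj : {in Sb &, injective behead}.
  move=> s t sSb tSb; have [x [s' es]] := nonnil s sSb.
  have [y [t' et]] := nonnil t tSb.
  move: (head_b s sSb) (head_b t tSb); rewrite es et /= => -> -> -> //.
apply: IH.
- by rewrite map_inj_in_uniq // filter_uniq.
- apply/allP => t /mapP[s]; rewrite mem_filter => /andP[_ sS] ->.
  by rewrite size_behead; have := allP aS s sS; case: (size s).
- move=> t1 t2 /mapP[s1 s1Sb ->] /mapP[s2 s2Sb ->] p12.
  have [x [s1' e1]] := nonnil s1 s1Sb; have [y [s2' e2]] := nonnil s2 s2Sb.
  have pS12 : prefix s1 s2.
    move: (head_b s1 s1Sb) (head_b s2 s2Sb) p12.
    by rewrite e1 e2 prefix_cons /= => -> -> ->; rewrite eqxx.
  move: s1Sb s2Sb; rewrite !mem_filter => /andP[_ s1S] /andP[_ s2S].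
  by rewrite (pS _ _ s1S s2S pS12).
Qed.

(* Kraft's inequality: sum_{s in S} 2^-|s| <= 1 for a prefix-free S,
   scaled by 2^L where L bounds the lengths in S. *)
Lemma kraft L (S : seq (seq bool)) :
  uniq S -> all (fun s => size s <= L)%N S -> prefix_free_seq S ->
  (\sum_(s <- S) 2 ^ (L - size s) <= 2 ^ L)%N.
Proof.
elim: L S => [|L IH] S uS aS pS.
  case: S uS aS pS => [|x S] uS aS pS; first by rewrite big_nil.
  have x0 : x = [::] by move: aS => /= /andP[]; rewrite leqn0 => /eqP/size0nil.
  have -> : S = [::].
    case: S uS aS {pS} => [//|y S] /= /andP[+ _] /and3P[_ + _].
    by rewrite x0 inE negb_or leqn0 size_eq0 eq_sym => /andP[/negPf ->].
  by rewrite big_seq1 x0.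
have [nS|nS] := boolP ([::] \in S).
  have pe : perm_eq S [:: [::]].
    apply: uniq_perm => // t; rewrite inE; apply/idP/idP.
    + by move=> tS; apply/eqP; symmetry; apply: pS => //; exact: prefix0s.
    + by move/eqP ->.
  by rewrite (perm_big _ pe) big_seq1 subn0.
rewrite (bigID (fun s => head false s == true)) /=.
rewrite expnS mul2n -addnn leq_add //; first exact: kraft_step.
rewrite (eq_bigl (fun s => head false s == false)); first exact: kraft_step.
by move=> s; case: (head false s).
Qed.

Lemma kraft_weighted (R : realFieldType) (S : seq (seq bool))
    (f : seq bool -> R) (y : R) :
  uniq S -> prefix_free_seq S -> 0 <= y ->
  (forall s, s \in S -> f s * 2 ^+ size s <= y) ->
  \sum_(s <- S) f s <= y.
Proof.
move=> uS pS y0 fS.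
pose L := (\sum_(t <- S) size t)%N.
have sizeL s : s \in S -> (size s <= L)%N.
  by move=> sS; rewrite /L (bigD1_seq s) //= leq_addr.
have p2L : (2 : R) ^+ L != 0 by rewrite expf_neq0.
have f_le s : s \in S -> f s <= y / 2 ^+ L * (2 ^ (L - size s))%:R.
  move=> sS; have eL : (2 : R) ^+ L = 2 ^+ (L - size s) * 2 ^+ size s.
    by rewrite -exprD subnK // sizeL.
  rewrite natrX eL invfM -mulrA mulrAC mulVf ?mulr1 ?expf_neq0 //.
  by rewrite mul1r ler_pdivlMr ?exprn_gt0 // fS.
apply: (@le_trans _ _ (\sum_(s <- S) y / 2 ^+ L * (2 ^ (L - size s))%:R)).
  by rewrite big_seq [X in _ <= X]big_seq; apply: ler_sum.
have kraftS : (\sum_(s <- S) 2 ^ (L - size s))%:R <= (2 ^ L)%:R :> R.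
  by rewrite ler_nat; apply: kraft => //; apply/allP.
rewrite -mulr_sumr -natr_sum.
apply: le_trans (ler_wpM2l _ kraftS) _; first by rewrite divr_ge0 ?exprn_ge0.
by rewrite natrX divfK.
Qed.

Lemma sum_group_by (V : nmodType) (I : finType) (T : eqType)
    (sg : I -> T) (S : seq T) (F : I -> V) :
  uniq S -> (forall i, sg i \in S) ->
  \sum_i F i = \sum_(t <- S) \sum_(i | sg i == t) F i.
Proof.
move=> uS sgS.
under [RHS]eq_bigr do rewrite big_mkcond.
rewrite exchange_big /=; apply: eq_bigr => i _.
rewrite (bigD1_seq (sg i)) //= eqxx big1_seq ?addr0 //.
by move=> t /andP[ne _]; rewrite eq_sym (negPf ne).
Qed.

Section Inner.
Variable R : realType.
Local Notation C := R[i].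
Variable n : nat.
Implicit Types u w : 'cV[C]_n.

Lemma inner_conj u w : (inner u w)^* = inner w u.
Proof.
rewrite /inner rmorph_sum; apply: eq_bigr => k _.
by rewrite rmorphM /= conjCK mulrC.
Qed.

Lemma innerBr u w1 w2 : inner u (w1 - w2) = inner u w1 - inner u w2.
Proof. by rewrite /inner -sumrB; apply: eq_bigr => k _; rewrite !mxE mulrBr. Qed.

Lemma innerBl u1 u2 w : inner (u1 - u2) w = inner u1 w - inner u2 w.
Proof.
by rewrite /inner -sumrB; apply: eq_bigr => k _; rewrite !mxE rmorphB mulrBl.
Qed.

Lemma inner_sumr (I : finType) (P : pred I) (F : I -> 'cV[C]_n) u :
  inner u (\sum_(i | P i) F i) = \sum_(i | P i) inner u (F i).
Proof.
rewrite /inner exchange_big; apply: eq_bigr => k _.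
by rewrite summxE mulr_sumr.
Qed.

Lemma inner_suml (I : finType) (P : pred I) (F : I -> 'cV[C]_n) w :
  inner (\sum_(i | P i) F i) w = \sum_(i | P i) inner (F i) w.
Proof.
rewrite /inner exchange_big; apply: eq_bigr => k _.
by rewrite summxE rmorph_sum mulr_suml.
Qed.

Lemma innerZr u a w : inner u (a *: w) = a * inner u w.
Proof. by rewrite /inner mulr_sumr; apply: eq_bigr => k _; rewrite mxE mulrCA. Qed.

Lemma innerZl a u w : inner (a *: u) w = a^* * inner u w.
Proof.
by rewrite /inner mulr_sumr; apply: eq_bigr => k _; rewrite mxE rmorphM mulrA.
Qed.

Lemma inner_ge0 u : 0 <= inner u u.
Proof. by apply: sumr_ge0 => k _; rewrite mulrC mul_conjC_ge0. Qed.

(* Bessel's inequality: sum_i |<v_i|w>|^2 <= <w|w> for an orthonormal family;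
   it follows from <w - S|w - S> >= 0 with S the projection of w. *)
Lemma bessel (I : finType) (P : pred I) (v : I -> 'cV[C]_n) w :
  (forall i j, inner (v i) (v j) = (i == j)%:R) ->
  \sum_(i | P i) inner w (v i) * inner (v i) w <= inner w w.
Proof.
move=> ov; set S := \sum_(i | P i) inner (v i) w *: v i.
set sq := \sum_(i | P i) inner w (v i) * inner (v i) w.
have wS : inner w S = sq.
  by rewrite inner_sumr; apply: eq_bigr => i _; rewrite innerZr mulrC.
have Sw : inner S w = sq.
  by rewrite inner_suml; apply: eq_bigr => i _; rewrite innerZl inner_conj.
have SS : inner S S = sq.
  rewrite inner_suml; apply: eq_bigr => i Pi.
  rewrite innerZl inner_sumr inner_conj (bigD1 i) //= big1 ?addr0.
    by rewrite innerZr ov eqxx mulr1.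
  by move=> j /andP[_ ji]; rewrite innerZr ov eq_sym (negPf ji) mulr0.
have := inner_ge0 (w - S).
by rewrite innerBl !innerBr wS Sw SS subrr subr0 subr_ge0.
Qed.

Lemma expect_ketbra (v u : 'cV[C]_n) : expect (ketbra v) u = inner u v * inner v u.
Proof.
rewrite /expect /inner mulr_suml; apply: eq_bigr => k _.
rewrite mulr_sumr; apply: eq_bigr => l _; rewrite mxE.
by rewrite !mulrA [_ * (v l 0)^*]mulrC.
Qed.

End Inner.

(* An orthonormal family F can capture, in total over any orthonormal family
   of pure states |v_i><v_i|, a weight of at most |F|: apply Bessel's
   inequality to each w in F. *)
Lemma captured_weight_le_card (R : realType) (s : nat) (I : finType)
    (P : pred I) (v : I -> 'cV[R[i]]_(2 ^ s)) (F : {fset seq R[i]}) :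
  (forall i j, inner (v i) (v j) = (i == j)%:R) -> orthonormal_alg s F ->
  \sum_(i | P i) \sum_(w <- F) expect (ketbra (v i)) (vec_of (2 ^ s) w)
    <= (#|` F|)%:R.
Proof.
move=> ov [_ onF]; rewrite exchange_big /=.
apply: (@le_trans _ _ (\sum_(w <- F) 1)); last by rewrite -sum1_size natr_sum.
rewrite big_seq [X in _ <= X]big_seq; apply: ler_sum => w wF.
under eq_bigr do rewrite expect_ketbra.
by have := bessel P (vec_of (2 ^ s) w) ov; rewrite onF // eqxx.
Qed.

Lemma pow2_log2 (R : realType) (y : R) : 0 < y -> 2 `^ (log2 y) = y.
Proof.
move=> y0; rewrite /powR /log2 pnatr_eq0 /= -mulrA mulVf ?mulr1; first by rewrite lnK.
by apply/lt0r_neq0/ln_gt0; rewrite ltr1n.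
Qed.

Lemma card_pow_le (R : realType) (k m : nat) (x : R) :
  k%:R + log2 m%:R < x -> m%:R * 2 ^+ k <= 2 `^ x.
Proof.
case: m => [|m] h; first by rewrite mul0r ltW // powR_gt0.
rewrite -(@pow2_log2 R _ (ltr0Sn R m)) -powR_mulrn // -powRD; last first.
  by apply/implyP => _; rewrite pnatr_eq0.
by apply: ler_powR; rewrite ?ler1n // addrC ltW.
Qed.

Lemma le_pow2_right_limit (R : realType) (a B : R) :
  (forall x, B < x -> a <= 2 `^ x) -> a <= 2 `^ B.
Proof.
move=> ha; have b0 : 0 < 2 `^ B by rewrite powR_gt0 // ltr0n.
apply/ler_addgt0Pr => e e0; set t := e / 2 `^ B.
have t0 : 0 < t by rewrite divr_gt0.
have lt0 : 0 < log2 (1 + t).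
  by apply: divr_gt0; apply: ln_gt0; [rewrite ltrDl | rewrite ltr1n].
have := ha (B + log2 (1 + t)); rewrite ltrDl => /(_ lt0).
rewrite powRD; last by apply/implyP => _; rewrite pnatr_eq0.
by rewrite pow2_log2 ?addr_gt0 // mulrDr mulr1 /t mulrC divfK // gt_eqF.
Qed.

Lemma QK_lt_witness (R : realType) (U : seq bool -> option {fset seq R[i]})
    (eps x : R) (n : nat) (tau : 'M[R[i]]_(2 ^ n)) :
  (QK U eps n tau < x%:E)%E ->
  exists p : seq bool * {fset seq R[i]},
    [/\ U p.1 = Some p.2, orthonormal_alg n p.2,
        (eps%:C)%C < \sum_(w <- p.2) expect tau (vec_of (2 ^ n) w)
      & (size p.1)%:R + log2 (#|` p.2|)%:R < x].
Proof.
move=> /ereal_inf_lt [y [sg [F [h1 h2 h3 ->]]]]; rewrite lte_fin => h4.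
by exists (sg, F); split.
Qed.

Lemma count_le_pow2 (R : realType) (U : seq bool -> option {fset seq R[i]})
    (eps x : R) (s N : nat) (v : 'I_N -> 'cV[R[i]]_(2 ^ s)) :
  prefix_free U -> (forall i j, inner (v i) (v j) = (i == j)%:R) ->
  (forall i, (QK U eps s (ketbra (v i)) < x%:E)%E) ->
  eps * N%:R <= 2 `^ x.
Proof.
move=> HU ov hQ; have [p hp] := choice (fun i => QK_lt_witness (hQ i)).
pose sg i := (p i).1; pose G sigma := odflt fset0 (U sigma).
have U_sg i : U (sg i) = Some (p i).2 by case: (hp i).
have G_sg i : G (sg i) = (p i).2 by rewrite /G U_sg.
pose S := undup [seq sg i | i <- enum 'I_N].
have sgS i : sg i \in S by rewrite mem_undup map_f // mem_enum.
have S_sg sigma : sigma \in S -> exists i, sg i = sigma.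
  by rewrite mem_undup => /mapP[i _ ->]; exists i.
pose mass sigma i := \sum_(w <- G sigma) expect (ketbra (v i)) (vec_of (2 ^ s) w).
have captured : ((eps * N%:R)%:C)%C <= \sum_i mass (sg i) i.
  have : \sum_(i < N) (eps%:C)%C <= \sum_i mass (sg i) i.
    by apply: ler_sum => i _; rewrite /mass G_sg; case: (hp i) => _ _ /ltW.
  by rewrite sumr_const card_ord rmorphM rmorph_nat mulr_natr.
have per_description sigma : sigma \in S ->
    \sum_(i | sg i == sigma) mass sigma i <= ((#|` G sigma|)%:R : R)%:C%C.
  move=> /S_sg [i0 <-]; rewrite rmorph_nat; apply: captured_weight_le_card => //.
  by rewrite G_sg; case: (hp i0).
have total : \sum_(sigma <- S) (#|` G sigma|)%:R <= 2 `^ x.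
  apply: kraft_weighted; rewrite ?undup_uniq ?powR_ge0 //.
    move=> a b /S_sg [i <-] /S_sg [j <-]; apply: HU; by rewrite U_sg.
  by move=> sigma /S_sg [i <-]; rewrite G_sg; apply: card_pow_le; case: (hp i).
rewrite -lecR; apply: le_trans captured _.
rewrite (sum_group_by _ (undup_uniq _) sgS).
apply: (@le_trans _ _ ((\sum_(sigma <- S) (#|` G sigma|)%:R : R)%:C%C)); last first.
  by rewrite lecR; exact: total.
rewrite rmorph_sum big_seq [X in _ <= X]big_seq.
apply: ler_sum => sigma sS; rewrite (eq_bigr (mass sigma)) => [|i /eqP -> //].
exact: per_description.
Qed.

Theorem mainTheorem7 (R : realType) (U : seq bool -> option {fset seq R[i]})
  (HU : prefix_free U) (eps B : R) (s N : nat)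
  (v : 'I_N -> 'cV[R[i]]_(2 ^ s)) :
  0 < eps ->
  (forall i j, inner (v i) (v j) = (i == j)%:R) ->
  (forall i, (QK U eps s (ketbra (v i)) <= B%:E)%E) ->
  N%:R <= eps^-1 * 2 `^ B.
Proof.
move=> eps0 ov hQ; rewrite ler_pdivlMl //.
apply: le_pow2_right_limit => x Bx; apply: (count_le_pow2 HU ov) => i.
by apply: (le_lt_trans (hQ i)); rewrite lte_fin.
Qed.
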